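(* Fix a set $\Psi\subseteq\mathcal{K}$, a number $q\ge0$, and for each $k\in\Psi$ an index $k'\in\mathcal{N}$. Define, for variables $p_n\ge0$ ($n\in\mathcal{N}$), $p_{k,k'}\ge0$ and $w_k\in(0,W^k_{MC}]$ ($k\in\Psi$), and multipliers $\lambda\ge0,\mu\ge0$, the Lagrangian $$\mathcal{L}=(1+\mu)\Big[\sum_{n=1}^N B^n_{SC}\log_2\!\Big(1+\tfrac{p_ng_n}{B^n_{SC}N_0}\Big)+\sum_{k\in\Psi}(W^k_{MC}-w_k)\log_2\!\Big(1+\tfrac{p_{k,k'}g_{k,k'}}{(W^k_{MC}-w_k)N_0}\Big)\Big]-\mu R^{SC}_{\min}$$ $$-q\Big(\sum_{n}\tfrac{p_n}{\xi}+\sum_{k\in\Psi}\tfrac{p_{k,k'}}{\xi}+\sum_{k\in\Psi}\big(2^{R^k_{MC}/w_k}-1\big)\tfrac{w_kN_0}{\xi h_k}+P_{\rm c}\Big)+\lambda\Big(P^{SC}_{\max}-\sum_n p_n-\sum_{k\in\Psi}p_{k,k'}-\sum_{k\in\Psi}\big(2^{R^k_{MC}/w_k}-1\big)\tfrac{w_kN_0}{h_k}\Big),$$ where $(W^k_{MC}-w_k)\log_2(\cdot)$ is interpreted as $0$ when $w_k=W^k_{MC}$. Then, given $\lambda$ and $\mu$, the bandwidth and power allocation maximizing $\mathcal{L}$ is $$w_k=\min\!\left(\frac{R^k_{MC}\ln2}{\mathcal{W}\!\left(\frac1e\Big(\frac{\mathcal{C}_k h_k}{(q/\xi+\lambda)N_0}-1\Big)\right)+1},\;W^k_{MC}\right),\quad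 k\in\Psi,$$ $$p_{k,k'}=(W^k_{MC}-w_k)\left[\frac{(1+\mu)\xi}{(q+\lambda\xi)\ln2}-\frac{N_0}{g_{k,k'}}\right]^+,\quad k\in\Psi,$$ $$p_n=B^n_{SC}\left[\frac{(1+\mu)\xi}{(q+\lambda\xi)\ln2}-\frac{N_0}{g_n}\right]^+,\quad n\in\mathcal{N},$$ where $[x]^+=\max\{x,0\}$, $\mathcal{W}$ is the Lambert $W$ function (i.e. $x=\mathcal{W}(x)e^{\mathcal{W}(x)}$), $\widetilde{p}_{k,k'}=\left[\frac{(1+\mu)\xi}{(q+\lambda\xi)\ln2}-\frac{N_0}{g_{k,k'}}\right]^+$, and $\mathcal{C}_k=(1+\mu)\log_2\!\big(1+\widetilde{p}_{k,k'}\frac{g_{k,k'}}{N_0}\big)-\big(\frac{q}{\xi}+\lambda\big)\widetilde{p}_{k,k'}$.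
   Context: Constants: $N_0>0$ noise spectral density; $\xi\in(0,1]$ power amplifier efficiency; $P_{\rm c}>0$ circuit power; $P^{SC}_{\max}>0$; $R^{SC}_{\min}\ge0$. For each $k\in\mathcal{K}=\{1,\dots,K\}$: $W^k_{MC}>0$, $R^k_{MC}>0$, $h_k>0$, and $g_{k,n}>0$ for $n\in\mathcal{N}=\{1,\dots,N\}$. For each $n\in\mathcal{N}$: $B^n_{SC}>0$, $g_n>0$. This Lagrangian arises from the subtractive (Dinkelbach) form of the small-cell energy-efficiency maximization for a fixed set $\Psi$ of served macro users, with $b_{k,k'}=W^k_{MC}-w_k$ and $q_k=(2^{R^k_{MC}/w_k}-1)w_kN_0/h_k$ substituted; $\lambda$ and $\mu$ are the multipliers of the total power constraint and the minimum rate constraint. *)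

From HB Require Import structures.
From mathcomp Require Import all_boot all_order all_algebra.
From mathcomp Require Import all_classical all_reals.
From mathcomp Require Import sequences exp.
Set Implicit Arguments. Unset Strict Implicit. Unset Printing Implicit Defensive.
Import Order.TTheory GRing.Theory Num.Theory.
Local Open Scope ring_scope.
Local Open Scope classical_set_scope.

Section Defs.
Variable R : realType.

Definition log2 (x : R) : R := ln x / ln 2.

Definition posp (x : R) : R := Num.max x 0.

(* Principal branch W_0 of the Lambert W function: for x >= -1/e, the unique
   y >= -1 with y * e^y = x.  (Arbitrary value 0 outside the domain.) *)
Definition LambertW (x : R) : R :=
  xget 0 [set y : R | -1 <= y /\ y * expR y = x].

Definition rate_term (N0 b p g : R) : R :=
  if b == 0 then 0 else b * log2 (1 + p * g / (b * N0)).

Variables (K N : nat) (N0 xi Pc Pmax Rmin : R)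
  (WMC RMC h : 'I_K -> R) (g : 'I_K -> 'I_N -> R) (B gn : 'I_N -> R)
  (Psi : {set 'I_K}) (kp : 'I_K -> 'I_N) (q lam mu : R).

(* The Lagrangian; p n = p_n, pk k = p_{k,k'} with k' = kp k, w k = w_k *)
Definition lagrangian (p : 'I_N -> R) (pk w : 'I_K -> R) : R :=
  (1 + mu) * (\sum_(n < N) B n * log2 (1 + p n * gn n / (B n * N0))
              + \sum_(k in Psi) rate_term N0 (WMC k - w k) (pk k) (g k (kp k)))
  - mu * Rmin
  - q * (\sum_(n < N) p n / xi + \sum_(k in Psi) pk k / xi
         + \sum_(k in Psi) (2 `^ (RMC k / w k) - 1) * (w k * N0 / (xi * h k))
         + Pc)
  + lam * (Pmax - \sum_(n < N) p n - \sum_(k in Psi) pk k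
           - \sum_(k in Psi) (2 `^ (RMC k / w k) - 1) * (w k * N0 / h k)).

Definition feasible (p : 'I_N -> R) (pk w : 'I_K -> R) : Prop :=
  (forall n, 0 <= p n) /\
  (forall k, k \in Psi -> 0 <= pk k /\ 0 < w k /\ w k <= WMC k).

Definition wlevel : R := (1 + mu) * xi / ((q + lam * xi) * ln 2).

Definition ptilde (k : 'I_K) : R := posp (wlevel - N0 / g k (kp k)).

Definition Ck (k : 'I_K) : R :=
  (1 + mu) * log2 (1 + ptilde k * g k (kp k) / N0) - (q / xi + lam) * ptilde k.

(* w_k = min(R ln2 / (W(...) + 1), W_MC); when W(...)+1 = 0 the first
   argument is +infinity, so the min is W_MC. *)
Definition w_opt (k : 'I_K) : R :=
  let d := LambertW (expR (-1) * (Ck k * h k / ((q / xi + lam) * N0) - 1)) + 1 in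
  if d == 0 then WMC k else Num.min (RMC k * ln 2 / d) (WMC k).

Definition pk_opt (k : 'I_K) : R := (WMC k - w_opt k) * ptilde k.

Definition p_opt (n : 'I_N) : R := B n * posp (wlevel - N0 / gn n).

End Defs.

From HB Require Import structures.
From mathcomp Require Import all_boot all_order all_algebra.
From mathcomp Require Import all_classical all_reals.
From mathcomp Require Import sequences exp topology normedtype.
From mathcomp Require Import ring lra.
Import Order.TTheory GRing.Theory Num.Theory numFieldNormedType.Exports.
Set Implicit Arguments. Unset Strict Implicit. Unset Printing Implicit Defensive.
Local Open Scope ring_scope.

(* Once the multipliers are fixed the Lagrangian separates into one concave
   term per small-cell subcarrier and one per served macro user.  In power,
   each term is a * b log2(1 + p g/(b N0)) - c p, maximised by water-filling;
   this follows from the tangent-line bound for ln at the water level.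
   For the macro user, maximising over the power first leaves
   (W - w) C - D (2^(R/w) - 1) w, which is concave in w.  Its stationarity
   condition C = D (1 + e^s (s - 1)) with s = R ln 2 / w is solved by the
   Lambert W function, and the optimum is clipped at W. *)

Section RealFacts.
Variable R : realType.
Implicit Types a b s t u x y : R.

Lemma posp_ge0 x : 0 <= posp x.
Proof. by rewrite /posp le_max lexx orbT. Qed.

Lemma ln2_gt0 : 0 < ln (2 : R).
Proof. by rewrite ln_gt0 // ltr1n. Qed.

Lemma ln_le_tangent u y : 0 < u -> 0 < y -> ln y <= ln u + (y - u) / u.
Proof.
move=> u_gt0 y_gt0.
have le := @le_ln1Dx R (y / u - 1).
rewrite subrKC ln_div ?posrE // in le.
have -> : (y - u) / u = y / u - 1 by field; rewrite gt_eqF.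
suff : ln y - ln u <= y / u - 1 by lra.
by apply: le; have := divr_gt0 y_gt0 u_gt0; lra.
Qed.

Lemma expR_ge_tangent s t : expR s * (1 + (t - s)) <= expR t.
Proof.
have -> : expR t = expR s * expR (t - s) by rewrite -expRD subrKC.
exact/ler_wpM2l/expR_ge1Dx/expR_ge0.
Qed.

Lemma expR_mulB1_le a b : 0 <= a -> a <= b -> expR a * (a - 1) <= expR b * (b - 1).
Proof.
move=> a_ge0 le_ab.
have := expR_gt0 a; have := expR_gt0 b.
case: (lerP 1 b) => b1 Eb Ea.
- have tan := expR_ge_tangent a b.
  have : 0 <= (expR b - expR a * (1 + (b - a))) * (b - 1) by apply: mulr_ge0; lra.
  have : 0 <= expR a * ((b - a) * b) by rewrite !mulr_ge0 //; lra.
  lra.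
- have tan := expR_ge_tangent b a.
  have : 0 <= (expR a - expR b * (1 + (a - b))) * (1 - a) by apply: mulr_ge0; lra.
  have : 0 <= expR b * ((b - a) * a) by rewrite !mulr_ge0 //; lra.
  lra.
Qed.

Lemma LambertWP x : - expR (-1) <= x ->
  -1 <= LambertW x /\ LambertW x * expR (LambertW x) = x.
Proof.
move=> x_ge.
suff ex : exists y, -1 <= y /\ y * expR y = x by exact: (xgetPex 0 ex).
have M_ge : -1 <= `|x| by have := normr_ge0 x; lra.
have cont : {within `[-1, `|x|], continuous (fun y : R => y * expR y)}%classic.
  apply: continuous_subspaceT => y.
  by apply: cvgM; [exact: cvg_id | exact: continuous_expR].
have x_le : x <= `|x| * expR `|x|.
  have := ler_wpM2l (normr_ge0 x) (expR_ge1Dx `|x|).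
  have := ler_norm x; have := normr_ge0 x; nra.
have [|y] := @IVT R _ _ _ x M_ge cont.
  by rewrite ge_min le_max mulN1r x_ge x_le orbT.
by rewrite in_itv /= => /andP[y_ge _] yE; exists y.
Qed.

End RealFacts.

Section Rate.
Variable R : realType.

Definition rate_gain (a c g N0 p : R) : R := a * log2 (1 + p * g / N0) - c * p.

Lemma rate_gain_le_waterfill (a c g N0 p : R) :
  0 < a -> 0 < c -> 0 < g -> 0 < N0 -> 0 <= p ->
  rate_gain a c g N0 p <= rate_gain a c g N0 (posp (a / (c * ln 2) - N0 / g)).
Proof.
move=> a_gt0 c_gt0 g_gt0 N0_gt0 p_ge0; have l2 := @ln2_gt0 R.
set pt := posp _; set m := a * g / (ln 2 * (N0 + pt * g)).
have pt_ge0 : 0 <= pt := posp_ge0 _.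
(* m is the marginal utility at pt: complementary slackness for p >= 0. *)
have [m_le_c slack] : m <= c /\ (c - m) * pt = 0.
  rewrite /m /pt /posp; case: (leP 0 (a / (c * ln 2) - N0 / g)) => level.
  - suff -> : a * g / (ln 2 * (N0 + (a / (c * ln 2) - N0 / g) * g)) = c.
      by rewrite subrr mul0r.
    by field; rewrite mulNr addrCA subrr addr0 !gt_eqF ?mulr_gt0.
  - rewrite mul0r addr0 mulr0; split => //.
    rewrite ler_pdivrMr ?mulr_gt0 //.
    have -> : a * g = c * (ln 2 * (a / (c * ln 2) * g)) by field; rewrite !gt_eqF.
    by rewrite !ler_pM2l // ltW // -ltr_pdivlMr //; lra.
have tangent : ln (1 + p * g / N0) <=
    ln (1 + pt * g / N0) + (p - pt) * g / (N0 + pt * g).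
  have -> : (p - pt) * g / (N0 + pt * g) =
      (1 + p * g / N0 - (1 + pt * g / N0)) / (1 + pt * g / N0).
    by field; rewrite !gt_eqF // ltr_wpDr ?mulr_ge0 // ltW.
  by apply: ln_le_tangent; rewrite ltr_wpDr ?divr_ge0 ?mulr_ge0 // ltW.
have := ler_wpM2l (ltW (divr_gt0 a_gt0 l2)) tangent; rewrite mulrDr.
have -> : a / ln 2 * ((p - pt) * g / (N0 + pt * g)) = m * (p - pt).
  by rewrite /m; field; rewrite !gt_eqF // ltr_wpDr ?mulr_ge0 // ltW.
have : 0 <= (c - m) * p by rewrite mulr_ge0 // subr_ge0.
have log2E x : a * log2 x = a / ln 2 * ln x by rewrite /log2; ring.
rewrite /rate_gain !log2E; lra.
Qed.

Lemma rate_termE (N0 b p g : R) : b != 0 ->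
  rate_term N0 b p g = b * log2 (1 + p * g / (b * N0)).
Proof. by rewrite /rate_term => /negPf ->. Qed.

Lemma rate_term_scale (a c g N0 b x : R) :
  a * rate_term N0 b (b * x) g - c * (b * x) = b * rate_gain a c g N0 x.
Proof.
have [->|b_neq0] := eqVneq b 0.
  by rewrite /rate_term eqxx !(mulr0, mul0r, subr0).
rewrite rate_termE // /rate_gain -[b * x * g]mulrA -mulf_div divff // mul1r.
ring.
Qed.

Lemma rate_term_le (a c g N0 b p : R) :
  0 < a -> 0 < c -> 0 < g -> 0 < N0 -> 0 <= b -> 0 <= p ->
  a * rate_term N0 b p g - c * p <=
  b * rate_gain a c g N0 (posp (a / (c * ln 2) - N0 / g)).
Proof.
move=> a_gt0 c_gt0 g_gt0 N0_gt0.
rewrite le_eqVlt => /predU1P[<- p_ge0|b_gt0 p_ge0].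
  by rewrite /rate_term eqxx mulr0 mul0r sub0r oppr_le0 mulr_ge0 // ltW.
have {1 2}-> : p = b * (p / b) by rewrite mulrC divfK // gt_eqF.
rewrite rate_term_scale ler_pM2l //.
by apply: rate_gain_le_waterfill; rewrite // divr_ge0 // ltW.
Qed.

End Rate.

Section Bandwidth.
Variable R : realType.
Implicit Types r s u w : R.

(* (2^(R/w) - 1) w for r = R ln 2: in units of N0/h, the power a macro user
   needs to reach rate R on bandwidth w. *)
Definition rate_power r w : R := (expR (r / w) - 1) * w.

Lemma rate_power_tangent r u w : 0 < u -> 0 < w ->
  rate_power r u + (expR (r / u) * (1 - r / u) - 1) * (w - u) <= rate_power r w.
Proof.
move=> u_gt0 w_gt0; rewrite /rate_power.
have := ler_wpM2r (ltW w_gt0) (expR_ge_tangent (r / u) (r / w)).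
have -> : expR (r / u) * (1 + (r / w - r / u)) * w =
  (expR (r / u) - 1) * u + (expR (r / u) * (1 - r / u) - 1) * (w - u) + w.
  by field; rewrite !gt_eqF.
lra.
Qed.

(* Concavity in w: the derivative at w' is D (1 + e^(r/w') (r/w' - 1)) - C,
   which is nonnegative and vanishes unless w' = W. *)
Lemma bandwidth_gain_le (C D W : R) r w w' s :
  0 < D -> 0 < w -> w <= W -> 0 < w' -> C = D * (1 + expR s * (s - 1)) ->
  0 <= s -> s <= r / w' -> (r / w' = s \/ w' = W) ->
  (W - w) * C - D * rate_power r w <= (W - w') * C - D * rate_power r w'.
Proof.
move=> D_gt0 w_gt0 w_le w'_gt0 CE s_ge0 s_le stationary.
have := ler_wpM2l (ltW D_gt0) (rate_power_tangent r w'_gt0 w_gt0).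
suff : (w' - w) * C <= (w' - w) * (D * (1 + expR (r / w') * (r / w' - 1))) by nra.
case: stationary => [-> | w'E]; first by rewrite CE.
rewrite CE; apply: ler_wpM2l; first by rewrite subr_ge0 w'E.
by rewrite ler_pM2l // lerD2l expR_mulB1_le.
Qed.

Lemma min_bandwidth_spec (W r d : R) : 0 < W -> 0 < r -> 0 <= d ->
  let w := if d == 0 then W else Num.min (r / d) W in
  [/\ 0 < w, w <= W, d <= r / w & (r / w = d \/ w = W)].
Proof.
move=> W_gt0 r_gt0; rewrite le_eqVlt => /predU1P[<- | d_gt0] /=.
  by rewrite eqxx; split => //; [rewrite divr_ge0 // ltW | right].
rewrite gt_eqF //; case: (leP (r / d) W) => [le_rdW | lt_Wrd].
- by rewrite invf_div mulrCA divff ?gt_eqF // mulr1 divr_gt0 //; split => //; left.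
- split => //; last by right.
  by rewrite ler_pdivlMr // mulrC -ler_pdivlMr // ltW.
Qed.

End Bandwidth.

Section Lagrangian.
Variables (R : realType) (K N : nat) (N0 xi Pc Pmax Rmin : R)
  (WMC RMC h : 'I_K -> R) (g : 'I_K -> 'I_N -> R) (B gn : 'I_N -> R)
  (Psi : {set 'I_K}) (kp : 'I_K -> 'I_N) (q lam mu : R).
Hypotheses (hN0 : 0 < N0) (hxi0 : 0 < xi)
  (hWMC : forall k, 0 < WMC k) (hRMC : forall k, 0 < RMC k)
  (hh : forall k, 0 < h k) (hg : forall k n, 0 < g k n)
  (hB : forall n, 0 < B n) (hgn : forall n, 0 < gn n)
  (hmu : 0 <= mu) (hqlam : 0 < q + lam * xi).

Local Notation cost := (q / xi + lam).
Local Notation Ck := (Ck N0 xi g kp q lam mu).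
Local Notation ptilde := (ptilde N0 xi g kp q lam mu).
Local Notation w_opt := (w_opt N0 xi WMC RMC h g kp q lam mu).
Local Notation pk_opt := (pk_opt N0 xi WMC RMC h g kp q lam mu).
Local Notation p_opt := (p_opt N0 xi B gn q lam mu).

Definition band_price k := cost * N0 / h k.

Definition subcarrier_gain n x := (1 + mu) * rate_term N0 (B n) x (gn n) - cost * x.

Definition macro_gain k x v := (1 + mu) * rate_term N0 (WMC k - v) x (g k (kp k))
  - cost * x - band_price k * rate_power (RMC k * ln 2) v.

Lemma cost_gt0 : 0 < cost.
Proof.
have -> : cost = (q + lam * xi) / xi by field; rewrite gt_eqF.
exact: divr_gt0.
Qed.

Lemma one_mu_gt0 : 0 < 1 + mu.
Proof. by move: hmu; lra. Qed.

Lemma band_price_gt0 k : 0 < band_price k.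
Proof. by rewrite divr_gt0 ?mulr_gt0 ?cost_gt0. Qed.

Lemma lagrangianE p pk w :
  lagrangian N0 xi Pc Pmax Rmin WMC RMC h g B gn Psi kp q lam mu p pk w =
  \sum_(n < N) subcarrier_gain n (p n) + \sum_(k in Psi) macro_gain k (pk k) (w k)
  + (lam * Pmax - mu * Rmin - q * Pc).
Proof.
have subcarrier_gainE n x : subcarrier_gain n x =
    (1 + mu) * (B n * log2 (1 + x * gn n / (B n * N0))) - q * (x / xi) - lam * x.
  by rewrite /subcarrier_gain rate_termE ?gt_eqF //; field; rewrite gt_eqF.
have macro_gainE k x v : macro_gain k x v =
    (1 + mu) * rate_term N0 (WMC k - v) x (g k (kp k)) - q * (x / xi) - lam * x
    - q * ((2 `^ (RMC k / v) - 1) * (v * N0 / (xi * h k)))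
    - lam * ((2 `^ (RMC k / v) - 1) * (v * N0 / h k)).
  rewrite /macro_gain /band_price /rate_power /powR pnatr_eq0 /= [RMC k / v * _]mulrAC.
  by field; rewrite !gt_eqF.
under eq_bigr => n _ do rewrite subcarrier_gainE.
under [\sum_(k in Psi) _]eq_bigr => k _ do rewrite macro_gainE.
rewrite /lagrangian !sumrB -!mulr_sumr; ring.
Qed.

Lemma wlevelE : wlevel xi q lam mu = (1 + mu) / (cost * ln 2).
Proof. by rewrite /wlevel; field; rewrite !gt_eqF ?ln2_gt0. Qed.

Lemma Ck_ge0 k : 0 <= Ck k.
Proof.
have := rate_gain_le_waterfill one_mu_gt0 cost_gt0 (hg k (kp k)) hN0 (lexx 0).
by rewrite /rate_gain !(mul0r, mulr0, addr0) /log2 ln1 mul0r mulr0 subr0 -wlevelE.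
Qed.

(* The value of R_k ln 2 / w_k at the stationary point of the bandwidth term. *)
Definition s_opt k := LambertW (expR (-1) * (Ck k * h k / (cost * N0) - 1)) + 1.

Lemma s_optP k : 0 <= s_opt k /\
  Ck k = band_price k * (1 + expR (s_opt k) * (s_opt k - 1)).
Proof.
have arg_ge : - expR (-1) <= expR (-1) * (Ck k * h k / (cost * N0) - 1).
  have : 0 <= Ck k * h k / (cost * N0).
    by rewrite divr_ge0 ?mulr_ge0 ?Ck_ge0 // ltW ?hh ?cost_gt0.
  have := expR_gt0 (-1 : R); nra.
have [W_ge WE] := LambertWP arg_ge.
rewrite /s_opt; split; first lra.
set y := LambertW _ in W_ge WE *.
have -> : expR (y + 1) * (y + 1 - 1) = expR 1 * (y * expR y) by rewrite expRD; ring.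
rewrite WE mulrA -expRD addrN expR0 mul1r /band_price.
by field; rewrite !gt_eqF ?mulr_gt0 ?cost_gt0.
Qed.

Lemma w_optP k : [/\ 0 < w_opt k, w_opt k <= WMC k, s_opt k <= RMC k * ln 2 / w_opt k
  & RMC k * ln 2 / w_opt k = s_opt k \/ w_opt k = WMC k].
Proof.
apply: min_bandwidth_spec; rewrite ?mulr_gt0 ?ln2_gt0 //.
by case: (s_optP k).
Qed.

Lemma opt_feasible : feasible WMC Psi p_opt pk_opt w_opt.
Proof.
split=> [n | k _]; first by rewrite /p_opt mulr_ge0 ?posp_ge0 ?ltW.
have [w_gt0 w_le _ _] := w_optP k.
by split; rewrite // /pk_opt mulr_ge0 ?posp_ge0 ?subr_ge0.
Qed.

Lemma subcarrier_gain_le n x : 0 <= x ->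
  subcarrier_gain n x <= subcarrier_gain n (p_opt n).
Proof.
move=> x_ge0; rewrite /subcarrier_gain /p_opt rate_term_scale wlevelE.
by apply: rate_term_le; rewrite ?one_mu_gt0 ?cost_gt0 ?hgn // ltW ?hB.
Qed.

Lemma macro_gain_le k x v : 0 <= x -> 0 < v -> v <= WMC k ->
  macro_gain k x v <= macro_gain k (pk_opt k) (w_opt k).
Proof.
move=> x_ge0 v_gt0 v_le.
have [s_ge0 CkE] := s_optP k; have [w_gt0 w_le s_le stationary] := w_optP k.
have power : (1 + mu) * rate_term N0 (WMC k - v) x (g k (kp k)) - cost * x <=
    (WMC k - v) * Ck k.
  rewrite /Ck /ptilde wlevelE.
  by apply: rate_term_le; rewrite ?one_mu_gt0 ?cost_gt0 ?subr_ge0.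
have opt_power : (1 + mu) * rate_term N0 (WMC k - w_opt k) (pk_opt k) (g k (kp k))
    - cost * pk_opt k = (WMC k - w_opt k) * Ck k by rewrite rate_term_scale.
have := bandwidth_gain_le (band_price_gt0 k) v_gt0 v_le w_gt0 CkE s_ge0 s_le stationary.
rewrite /macro_gain opt_power; lra.
Qed.

End Lagrangian.

Theorem theorem2 (R : realType) (K N : nat) (N0 xi Pc Pmax Rmin : R)
  (WMC RMC h : 'I_K -> R) (g : 'I_K -> 'I_N -> R) (B gn : 'I_N -> R)
  (Psi : {set 'I_K}) (kp : 'I_K -> 'I_N) (q lam mu : R)
  (hN0 : 0 < N0) (hxi0 : 0 < xi) (hxi1 : xi <= 1) (hPc : 0 < Pc)
  (hPmax : 0 < Pmax) (hRmin : 0 <= Rmin)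
  (hWMC : forall k, 0 < WMC k) (hRMC : forall k, 0 < RMC k)
  (hh : forall k, 0 < h k) (hg : forall k n, 0 < g k n)
  (hB : forall n, 0 < B n) (hgn : forall n, 0 < gn n)
  (hq : 0 <= q) (hlam : 0 <= lam) (hmu : 0 <= mu)
  (hqlam : 0 < q + lam * xi) :
  let L := lagrangian N0 xi Pc Pmax Rmin WMC RMC h g B gn Psi kp q lam mu in
  let p' := p_opt N0 xi B gn q lam mu in
  let pk' := pk_opt N0 xi WMC RMC h g kp q lam mu in
  let w' := w_opt N0 xi WMC RMC h g kp q lam mu in
  feasible WMC Psi p' pk' w' /\
  (forall (p : 'I_N -> R) (pk w : 'I_K -> R),
     feasible WMC Psi p pk w -> L p pk w <= L p' pk' w').
Proof.
move=> L p' pk' w'; split; first exact: opt_feasible.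
move=> p pk w [p_ge0 pkw_ok]; rewrite /L !lagrangianE // lerD2r.
apply: lerD; apply: ler_sum.
  by move=> n _; apply: subcarrier_gain_le.
by move=> k /pkw_ok[pk_ge0 [w_gt0 w_le]]; apply: macro_gain_le.
Qed.
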